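(* Let $T\in V$ be a target variable. If $0<\zeta_T<n$ and the family $\{\Upsilon_1\setminus\{T\},\dots,\Upsilon_n\setminus\{T\}\}$ is not conservative, then $pa(T)\subseteq\bigcup_{i=1}^{n}MB_i(T)\subseteq MB(T)$.
   Context: Let $G=(V,E)$ be a DAG (causal Bayesian network) over a finite set $V$ of random variables with joint distribution $P$ satisfying the Markov condition with respect to $G$; causal sufficiency is assumed. For $X\in V$, $pa(X)$ and $ch(X)$ are the parents and children of $X$ in $G$, $sp(X)=\big(\bigcup_{Y\in ch(X)}pa(Y)\big)\setminus\{X\}$ is the set of spouses, and $MB(X)=pa(X)\cup ch(X)\cup sp(X)$ is the Markov blanket. There are $n\ge 1$ intervention experiments; in the $i$-th, the set $\Upsilon_i\subseteq V$ (possibly empty) is manipulated. The post-intervention DAG is $G_i=(V,E_i)$ with $E_i=\{(a,b)\in E: b\notin\Upsilon_i\}$, with distribution $P_i(V)=\prod_{V_j\notin\Upsilon_i}P(V_j\mid pa(V_j))\prod_{V_j\in\Upsilon_i}P_i(V_j)$, and $D_i$ is a dataset drawn from $P_i$. It is assumed that each $P_i$ is faithful to $G_i$ and that conditional independence tests on $D_i$ are reliable (return exactly the conditional independences of $P_i$). $MB_i(T)$ denotes the Markov blanket of $T$ found in $D_i$, i.e. the set of parents, children and spouses of $T$ in $G_i$. $\zeta_T=|\{i:T\in\Upsilon_i\}|$. A family $\{A_1,\dots,A_n\}$ of subsets of $V$ is called conservative if for every $V_j\in\bigcup_{i=1}^n A_i$ there exists $i$ with $V_j\notin A_i$. *)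

From mathcomp Require Import all_boot.
Set Implicit Arguments. Unset Strict Implicit. Unset Printing Implicit Defensive.

(* A directed graph over the finite variable set V is an edge relation
   E : rel V, with E a b meaning a -> b. *)

Definition dag (V : finType) (E : rel V) : Prop :=
  forall x y : V, E x y -> ~~ connect E y x.

Definition pa (V : finType) (E : rel V) (X : V) : {set V} := [set Y | E Y X].
Definition ch (V : finType) (E : rel V) (X : V) : {set V} := [set Y | E X Y].
Definition sp (V : finType) (E : rel V) (X : V) : {set V} :=
  (\bigcup_(Y in ch E X) pa E Y) :\ X.
Definition MB (V : finType) (E : rel V) (X : V) : {set V} :=
  pa E X :|: ch E X :|: sp E X.

Definition post_int (V : finType) (E : rel V) (Ups : {set V}) : rel V :=
  [rel a b | E a b && (b \notin Ups)].

(* MB_i(T): Markov blanket of T in G_i (as fixed by the context, under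
   faithfulness and reliable CI tests). *)
Definition MBi (V : finType) (E : rel V) (n : nat) (Ups : 'I_n -> {set V})
  (i : 'I_n) (T : V) : {set V} := MB (post_int E (Ups i)) T.

Definition zeta (V : finType) (n : nat) (Ups : 'I_n -> {set V}) (T : V) : nat :=
  #|[set i : 'I_n | T \in Ups i]|.

Definition conservative (V : finType) (n : nat) (A : 'I_n -> {set V}) : Prop :=
  forall v : V, v \in \bigcup_(i < n) A i -> exists i : 'I_n, v \notin A i.

(* Some experiment leaves T unmanipulated, since zeta T < n; there every
   edge into T survives, so pa(T) lies in that experiment's Markov blanket.
   Conversely, each post-intervention graph only deletes edges, and the
   Markov blanket is monotone in the edge relation. *)
From mathcomp Require Import all_boot.

Set Implicit Arguments.
Unset Strict Implicit.
Unset Printing Implicit Defensive.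

Section MarkovBlanketMonotone.

Variables (V : finType) (E F : rel V).
Hypothesis sub_FE : subrel F E.

Lemma pa_subrel (X : V) : pa F X \subset pa E X.
Proof. by apply/subsetP => y; rewrite !inE => /sub_FE. Qed.

Lemma ch_subrel (X : V) : ch F X \subset ch E X.
Proof. by apply/subsetP => y; rewrite !inE => /sub_FE. Qed.

Lemma sp_subrel (X : V) : sp F X \subset sp E X.
Proof.
apply: setSD; apply/bigcupsP => Y FXY.
apply: subset_trans (pa_subrel Y) _.
by apply: bigcup_sup; apply: (subsetP (ch_subrel X)).
Qed.

Lemma MB_subrel (X : V) : MB F X \subset MB E X.
Proof. by rewrite !setUSS ?pa_subrel ?ch_subrel ?sp_subrel. Qed.

End MarkovBlanketMonotone.

Lemma post_int_subrel (V : finType) (E : rel V) (Ups : {set V}) :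
  subrel (post_int E Ups) E.
Proof. by move=> a b /andP []. Qed.

Lemma pa_post_int (V : finType) (E : rel V) (Ups : {set V}) (X : V) :
  X \notin Ups -> pa (post_int E Ups) X = pa E X.
Proof. by move=> XnUps; apply/setP => y; rewrite !inE /post_int /= XnUps andbT. Qed.

Lemma zeta_lt_unmanipulated (V : finType) (n : nat) (Ups : 'I_n -> {set V})
  (T : V) : zeta Ups T < n -> exists i : 'I_n, T \notin Ups i.
Proof.
rewrite /zeta => zeta_lt; apply/existsP; rewrite -negb_forall.
apply: contraTN zeta_lt => /forallP allUps.
have -> : [set i : 'I_n | T \in Ups i] = setT by apply/setP => i; rewrite !inE allUps.
by rewrite cardsT card_ord ltnn.
Qed.

Theorem theorem6 (V : finType) (E : rel V) (n : nat) (Ups : 'I_n -> {set V})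
  (T : V) :
  dag E -> 0 < n ->
  0 < zeta Ups T < n ->
  ~ conservative (fun i : 'I_n => Ups i :\ T) ->
  pa E T \subset \bigcup_(i < n) MBi E Ups i T /\
  \bigcup_(i < n) MBi E Ups i T \subset MB E T.
Proof.
move=> _ _ /andP [_ /zeta_lt_unmanipulated [i TnUps]] _; split.
- apply: subset_trans (bigcup_sup i isT).
  by rewrite /MBi /MB -(pa_post_int E TnUps) -setUA subsetUl.
- by apply/bigcupsP => j _; apply/MB_subrel/post_int_subrel.
Qed.
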